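(* Fix integers $D\ge1$, $\bar L\ge1$, a probability law $P_L$ on $\{1,\dots,\bar L\}$, and measurable weight functions $g_\nu:\{1,\dots,L\}\times\mathbb R^L\to[0,\infty)$ (for each $L$) such that for every $k^*\in\mathbb R^D$, every $L$ and every $\epsilon$, $x\mapsto g_\nu(\epsilon,\frac1{\sqrt D}xk^* )\prod_{\ell=1}^L\mathcal N(x_\ell;0,I_D)$ is a probability density on $\mathbb R^{L\times D}$. Assume there is a constant $c_\nu\ge 0$ such that for all $L$, all $\epsilon,\epsilon'\in\{1,\dots,L\}$ and all $\chi\in\mathbb R^L$, $$\frac{g_\nu(\epsilon,\chi)}{g_\nu(\epsilon',\chi)}=e^{c_\nu(\chi_\epsilon-\chi_{\epsilon'})}.$$ Let $k^*,v^*\in\mathbb R^D$ be arbitrary and generate $(L,\epsilon^*,X,y)$ by: $L\sim P_L$; $\epsilon^*\sim\mathrm{Unif}(\{1,\dots,L\})$ given $L$; $X\in\mathbb R^{L\times D}$ with density $g_\nu(\epsilon^*,\frac1{\sqrt D}xk^* )\prod_{\ell}\mathcal N(x_\ell;0,I_D)$ given $(L,\epsilon^* )$; and $y=\frac1{\sqrt D}X_{\epsilon^*}v^*$. For $k,v\in\mathbb R^D$ define the softmax attention predictor $f_{k,v}(X)=\mathrm{softmax}(\chi)^\top z$ with $\chi=\frac1{\sqrt D}Xk\in\mathbb R^L$, $z=\frac1{\sqrt D}Xv\in\mathbb R^L$ and $\mathrm{softmax}(\chi)_\ell=e^{\chi_\ell}/\sum_{\ell'=1}^Le^{\chi_{\ell'}}$.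 Then $$\min_{(k,v)\in(\mathbb R^D)^2}\mathbb E\big[(y-f_{k,v}(X))^2\big]=\mathbb E\big[(y-\mathbb E[y\mid X,L,k^*,v^*])^2\big],$$ where both expectations are over $(L,\epsilon^*,X)$ with $k^*,v^*$ fixed; i.e. the softmax attention class attains the Bayes risk.
   Context: $\mathcal N(x;\omega,V)$ is the Gaussian density. The condition on $g_\nu$ holds for instance for the spiked model $g_\nu(\epsilon,\chi)=e^{\sqrt\nu\chi_\epsilon-\nu/2}$ and the maximum-correlation model $g_\nu(\epsilon,\chi)=Le^{\nu\chi_\epsilon}/\sum_\ell e^{\nu\chi_\ell}$. *)

From HB Require Import structures.
From mathcomp Require Import all_boot all_order all_algebra.
From mathcomp Require Import all_classical all_reals all_analysis.
Set Implicit Arguments. Unset Strict Implicit. Unset Printing Implicit Defensive.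
Import Order.TTheory GRing.Theory Num.Theory.
Local Open Scope classical_set_scope.
Local Open Scope ring_scope.

Section Defs.
Variable R : realType.

(* Lebesgue integral over R^n of a [0,+oo]-valued function, written as the
   iterated integral over the coordinates 0..n-1 (by Tonelli this is the
   Lebesgue integral on R^n for nonnegative measurable integrands). *)
Fixpoint iter_int (n : nat) (F : (nat -> R) -> \bar R) : \bar R :=
  match n with
  | 0 => F (fun _ => 0)
  | n'.+1 => (\int[@lebesgue_measure R]_(t in [set: R])
               iter_int n' (fun v => F (fun k => if k == n' then t else v k)))%E
  end.

Definition mat_int (L D : nat) (F : 'M[R]_(L, D) -> \bar R) : \bar R :=
  iter_int (L * D) (fun v => F (\matrix_(i < L, j < D) v (i * D + j)%N)).

Definition gauss_mat (L D : nat) (X : 'M[R]_(L, D)) : R :=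
  \prod_(i < L) \prod_(j < D) normal_pdf 0 1 (X i j).

Definition attn_proj (L D : nat) (X : 'M[R]_(L, D)) (k : 'cV[R]_D) : 'cV[R]_L :=
  (Num.sqrt (D%:R))^-1 *: (X *m k).

Definition softmax (L : nat) (chi : 'cV[R]_L) : 'cV[R]_L :=
  \col_(l < L) (expR (chi l 0) / \sum_(l' < L) expR (chi l' 0)).

Definition attn (L D : nat) (k v : 'cV[R]_D) (X : 'M[R]_(L, D)) : R :=
  \sum_(l < L) softmax (attn_proj X k) l 0 * attn_proj X v l 0.

Definition target (L D : nat) (eps : 'I_L) (vstar : 'cV[R]_D) (X : 'M[R]_(L, D)) : R :=
  attn_proj X vstar eps 0.

Variable D Lbar : nat.
Variable PL : nat -> R.
Variable g : forall L : nat, 'I_L -> 'cV[R]_L -> R.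
Variable kstar vstar : 'cV[R]_D.

Definition dens (L : nat) (eps : 'I_L) (X : 'M[R]_(L, D)) : R :=
  g eps (attn_proj X kstar) * gauss_mat X.

Definition joint (L : nat) (eps : 'I_L) (X : 'M[R]_(L, D)) : R :=
  PL L * L%:R^-1 * dens eps X.

(* E[h(L,eps,X)] for h >= 0, over L ~ P_L on {1..Lbar}, eps ~ Unif, X ~ dens *)
Definition expect (h : forall L : nat, 'I_L -> 'M[R]_(L, D) -> R) : \bar R :=
  (\sum_(1 <= L < Lbar.+1)
     \sum_(eps < L) mat_int (fun X => (joint eps X * h L eps X)%:E))%E.

(* E[y | X, L] via Bayes' rule: posterior of eps given (X, L) *)
Definition cond_exp_y (L : nat) (X : 'M[R]_(L, D)) : R :=
  \sum_(eps < L) (joint eps X / \sum_(e < L) joint e X) * target eps vstar X.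

Definition risk (k v : 'cV[R]_D) : \bar R :=
  expect (fun L eps X => (target eps vstar X - attn k v X) ^+ 2).

Definition bayes_risk : \bar R :=
  expect (fun L eps X => (target eps vstar X - cond_exp_y X) ^+ 2).

End Defs.

From HB Require Import structures.
From mathcomp Require Import all_boot all_order all_algebra.
From mathcomp Require Import all_classical all_reals all_analysis.
From mathcomp Require Import measurable_realfun ring.
Set Implicit Arguments.
Unset Strict Implicit.
Unset Printing Implicit Defensive.

Import Order.TTheory GRing.Theory Num.Theory.
Local Open Scope classical_set_scope.
Local Open Scope ring_scope.

(* Since g(eps, chi) / g(eps', chi) = exp(c (chi_eps - chi_eps')), Bayes' rule
   gives P(eps^* = eps | L, X) = softmax(c chi)_eps with chi = X k^* / sqrt D,
   so E[y | X, L] is exactly the attention predictor f_{c k^*, v^*}(X).  With w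
   the joint density and m this posterior mean, every prediction a satisfies
     sum_eps w_eps (y_eps - a)^2
       = sum_eps w_eps (y_eps - m)^2 + (sum_eps w_eps) (m - a)^2,
   and integrating over X shows that k = c k^*, v = v^* attains the Bayes risk
   and that no (k, v) does better. *)

Lemma weighted_bias_variance (R : comPzRingType) (I : Type) (r : seq I)
    (w t : I -> R) (m a : R) :
  \sum_(i <- r) w i * t i = (\sum_(i <- r) w i) * m ->
  \sum_(i <- r) w i * (t i - a) ^+ 2 =
  \sum_(i <- r) w i * (t i - m) ^+ 2 + (\sum_(i <- r) w i) * (m - a) ^+ 2.
Proof.
move=> mean_m.
have expand i : w i * (t i - a) ^+ 2 = w i * (t i - m) ^+ 2 +
    (2 * (m - a) * (w i * t i) + (a ^+ 2 - m ^+ 2) * w i) by ring.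
rewrite (eq_bigr _ (fun i _ => expand i)) !big_split /= -!mulr_sumr mean_m.
ring.
Qed.

Section Softmax.
Variable R : realType.

Lemma sum_expR_gt0 L (f : 'I_L -> R) (l : 'I_L) : 0 < \sum_(i < L) expR (f i).
Proof.
rewrite (bigD1 l) //= ltr_pwDl ?expR_gt0 //.
by apply: sumr_ge0 => i _; exact: expR_ge0.
Qed.

Lemma softmax_mul_sum L (chi : 'cV[R]_L) (w : 'I_L -> R) (l : 'I_L) :
  (forall i j, w i / w j = expR (chi i 0 - chi j 0)) ->
  softmax chi l 0 * \sum_(i < L) w i = w l.
Proof.
move=> w_ratio.
(* With x / 0 = 0, the ratio hypothesis at i = j = l forces w l != 0. *)
have wl_neq0 : w l != 0.
  apply/eqP => wl0; have := w_ratio l l.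
  by rewrite wl0 mul0r subrr expR0 => /eqP; rewrite eq_sym oner_eq0.
have wE i : w i = w l * expR (- chi l 0) * expR (chi i 0).
  by rewrite -mulrA -expRD addrC -w_ratio mulrC divfK.
rewrite (eq_bigr _ (fun i _ => wE i)) -mulr_sumr /softmax mxE expRN.
have := sum_expR_gt0 (fun i => chi i 0) l; rewrite lt0r => /andP[S_neq0 _].
by field; rewrite S_neq0 gt_eqF ?expR_gt0.
Qed.

End Softmax.

Lemma attn_projZ (R : realType) L D (X : 'M[R]_(L, D)) (a : R) (k : 'cV[R]_D) :
  attn_proj X (a *: k) = a *: attn_proj X k.
Proof. by rewrite /attn_proj -scalemxAr !scalerA mulrC. Qed.

Section IteratedIntegral.
Variable R : realType.
Local Open Scope ereal_scope.

Lemma iter_int_ge0 n (F : (nat -> R) -> \bar R) :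
  (forall v, 0 <= F v) -> 0 <= iter_int n F.
Proof.
elim: n F => [|n IH] F F_ge0 /=; first exact: F_ge0.
by apply: integral_ge0 => t _; apply: IH => v; exact: F_ge0.
Qed.

Lemma iter_int0 n : @iter_int R n (fun=> 0) = 0.
Proof.
elim: n => [//|n IH] /=.
by under eq_integral do rewrite IH; exact: integral0.
Qed.

Lemma nth_rcons_tuple n (s : n.-tuple R) (t : R) k :
  nth 0%R (rcons s t) k = if k == n then t else nth 0%R s k.
Proof.
rewrite nth_rcons size_tuple.
case: ltngtP => // k_gt.
by rewrite nth_default // size_tuple ltnW.
Qed.

Lemma measurable_rcons_tuple d (T : measurableType d) n :
  measurable_fun [set: (T * R) * n.-tuple R]
    (fun q => (q.1.1, rcons_tuple q.2 q.1.2)).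
Proof.
apply: measurable_fun_pair => /=.
  exact: (measurableT_comp measurable_fst measurable_fst).
apply/measurable_fun_tnthP => i /=.
have [i_lt|i_ge] := ltnP i n.
  rewrite (_ : _ \o _ = fun q => tnth q.2 (Ordinal i_lt)).
    exact: (measurableT_comp (measurable_tnth _) measurable_snd).
  by apply/funext => q /=; rewrite !(tnth_nth 0%R) nth_rcons_tuple ltn_eqF.
rewrite (_ : _ \o _ = fun q => q.1.2).
  exact: (measurableT_comp measurable_snd measurable_fst).
have i_eq : nat_of_ord i = n by apply/eqP; rewrite eqn_leq i_ge -ltnS ltn_ord.
by apply/funext => q /=; rewrite (tnth_nth 0%R) nth_rcons_tuple i_eq eqxx.
Qed.

Lemma measurable_fun_rcons d (T : measurableType d) n
    (F : T -> (nat -> R) -> \bar R) :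
  measurable_fun [set: T * n.+1.-tuple R] (fun p => F p.1 (nth 0%R p.2)) ->
  measurable_fun [set: (T * R) * n.-tuple R]
    (fun q => F q.1.1 (fun k => if k == n then q.1.2 else nth 0%R q.2 k)).
Proof.
move=> mF; have := measurableT_comp mF (@measurable_rcons_tuple _ T n).
congr measurable_fun; apply/funext => q /=; congr (F _ _).
by apply/funext => k; rewrite nth_rcons_tuple.
Qed.

Lemma measurable_iter_int n d (T : measurableType d)
    (F : T -> (nat -> R) -> \bar R) :
  (forall x v, 0 <= F x v) ->
  measurable_fun [set: T * n.-tuple R] (fun p => F p.1 (nth 0%R p.2)) ->
  measurable_fun [set: T] (fun x => iter_int n (F x)).
Proof.
elim: n d T F => [|n IH] d T F F_ge0 mF /=.
  have := measurable_fun_pair1 [tuple] mF; congr measurable_fun.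
  by apply/funext => x; congr (F _ _); apply/funext => k; rewrite nth_nil.
pose G (p : T * R) v := F p.1 (fun k => if k == n then p.2 else v k).
have mG : measurable_fun [set: T * R] (fun p => iter_int n (G p)).
  by apply: IH => [p v|]; [exact: F_ge0 | exact: measurable_fun_rcons].
apply: (measurable_fun_fubini_tonelli_F (m2 := @lebesgue_measure R) _ mG) => p.
by apply: iter_int_ge0 => v; exact: F_ge0.
Qed.

Lemma iter_intD n d (T : measurableType d) (F G : T -> (nat -> R) -> \bar R) :
  (forall x v, 0 <= F x v) -> (forall x v, 0 <= G x v) ->
  measurable_fun [set: T * n.-tuple R] (fun p => F p.1 (nth 0%R p.2)) ->
  measurable_fun [set: T * n.-tuple R] (fun p => G p.1 (nth 0%R p.2)) ->
  forall x,
  iter_int n (fun v => F x v + G x v) = iter_int n (F x) + iter_int n (G x).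
Proof.
elim: n d T F G => [//|n IH] d T F G F_ge0 G_ge0 mF mG x /=.
pose upd (H : T -> (nat -> R) -> \bar R) (p : T * R) v :=
  H p.1 (fun k => if k == n then p.2 else v k).
have m_section H : (forall x v, 0 <= H x v) ->
    measurable_fun [set: T * n.+1.-tuple R] (fun p => H p.1 (nth 0%R p.2)) ->
    measurable_fun [set: R] (fun t => iter_int n (upd H (x, t))).
  move=> H_ge0 mH.
  have mIH : measurable_fun [set: T * R] (fun p => iter_int n (upd H p)).
    apply: measurable_iter_int => [p v|]; first exact: H_ge0.
    exact: measurable_fun_rcons.
  exact: (measurable_fun_pair2 x mIH).
rewrite -ge0_integralD //.
- apply: eq_integral => t _.
  apply: (IH _ _ (upd F) (upd G) _ _ _ _ (x, t)) => [p v|p v||].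
  + exact: F_ge0.
  + exact: G_ge0.
  + exact: measurable_fun_rcons.
  + exact: measurable_fun_rcons.
- by move=> t _; apply: iter_int_ge0 => v; exact: F_ge0.
- exact: m_section.
- by move=> t _; apply: iter_int_ge0 => v; exact: G_ge0.
- exact: m_section.
Qed.

End IteratedIntegral.

Section MatrixIntegral.
Variables (R : realType) (L D : nat).
Local Open Scope ereal_scope.

(* [mat_int F] unfolds to [iter_int (L * D) (fun v => F (row_major_mx v))]. *)
Definition row_major_mx (v : nat -> R) : 'M[R]_(L, D) :=
  \matrix_(i < L, j < D) v (i * D + j)%N.

Definition mx_measurable (F : 'M[R]_(L, D) -> R) : Prop :=
  measurable_fun [set: (L * D).-tuple R]
    (fun s => F (row_major_mx (nth 0%R s))).

Lemma mx_measurable_entry (i : 'I_L) (j : 'I_D) :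
  mx_measurable (fun X => X i j).
Proof.
have ij_lt : (i * D + j < L * D)%N.
  apply: (@leq_trans (i.+1 * D)); first by rewrite mulSn addnC ltn_add2r.
  by rewrite leq_mul2r ltn_ord orbT.
rewrite /mx_measurable (_ : (fun s => _) = fun s => tnth s (Ordinal ij_lt)).
  exact: measurable_tnth.
by apply/funext => s; rewrite mxE (tnth_nth 0%R).
Qed.

Lemma mat_int_ge0 (F : 'M[R]_(L, D) -> R) :
  (forall X, 0 <= F X)%R -> 0 <= mat_int (fun X => (F X)%:E).
Proof. by move=> F_ge0; apply: iter_int_ge0 => v; rewrite lee_fin. Qed.

Lemma mat_intD (F G : 'M[R]_(L, D) -> R) :
  (forall X, 0 <= F X)%R -> (forall X, 0 <= G X)%R ->
  mx_measurable F -> mx_measurable G ->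
  mat_int (fun X => (F X + G X)%:E) =
  mat_int (fun X => (F X)%:E) + mat_int (fun X => (G X)%:E).
Proof.
move=> F_ge0 G_ge0 mF mG.
have mE H : mx_measurable H -> measurable_fun [set: unit * (L * D).-tuple R]
    (fun p => (H (row_major_mx (nth 0%R p.2)))%:E).
  move=> mH; apply/measurable_EFinP.
  exact: (measurableT_comp mH measurable_snd).
apply: (@iter_intD R (L * D) _ unit (fun _ v => (F (row_major_mx v))%:E)
  (fun _ v => (G (row_major_mx v))%:E) _ _ (mE _ mF) (mE _ mG) tt) => _ v.
- by rewrite lee_fin.
- by rewrite lee_fin.
Qed.

Lemma mat_int_sum (I : Type) (r : seq I) (F : I -> 'M[R]_(L, D) -> R) :
  (forall i X, 0 <= F i X)%R -> (forall i, mx_measurable (F i)) ->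
  mat_int (fun X => (\sum_(i <- r) F i X)%:E) =
  \sum_(i <- r) mat_int (fun X => (F i X)%:E).
Proof.
move=> F_ge0 mF; elim: r => [|i r IH].
  by under eq_fun do rewrite big_nil; rewrite big_nil; exact: iter_int0.
under eq_fun do rewrite big_cons; rewrite big_cons -IH mat_intD //.
- by move=> X; apply: sumr_ge0 => j _.
- by rewrite /mx_measurable; apply: measurable_sum.
Qed.

End MatrixIntegral.

Lemma measurable_funV_gt0 (R : realType) d (T : measurableType d) (f : T -> R) :
  measurable_fun [set: T] f -> (forall x, 0 < f x) ->
  measurable_fun [set: T] (fun x => (f x)^-1).
Proof.
move=> mf f_gt0.
rewrite (_ : (fun x => _) = fun x => expR (- ln (f x))); last first.
  by apply/funext => x; rewrite expRN lnK // posrE.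
apply: (measurableT_comp (@measurable_expR R)).
exact: measurableT_comp (measurableT_comp (@measurable_ln R) mf).
Qed.

Section MeasurableAttention.
Variables (R : realType) (L D : nat).
Context d (T : measurableType d) (h : T -> 'M[R]_(L, D)).
Hypothesis measurable_entry :
  forall i j, measurable_fun [set: T] (fun x => h x i j).

Lemma measurable_attn_proj (k : 'cV[R]_D) l :
  measurable_fun [set: T] (fun x => attn_proj (h x) k l 0).
Proof.
rewrite /attn_proj; under eq_fun do rewrite !mxE.
apply: measurable_funM; first exact: measurable_cst.
apply: measurable_sum => j.
by apply: measurable_funM => //; exact: measurable_cst.
Qed.

Lemma measurable_fun_attn_proj (G : 'cV[R]_L -> R) (k : 'cV[R]_D) :
  measurable_fun [set: L.-tuple R] (fun t => G (\col_(i < L) tnth t i)) ->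
  measurable_fun [set: T] (fun x => G (attn_proj (h x) k)).
Proof.
move=> mG.
have m_tuple : measurable_fun [set: T]
    (fun x => [tuple attn_proj (h x) k i 0 | i < L]).
  apply/measurable_fun_tnthP => i.
  rewrite (_ : _ \o _ = fun x => attn_proj (h x) k i 0).
    exact: measurable_attn_proj.
  by apply/funext => x /=; rewrite tnth_mktuple.
have := measurableT_comp mG m_tuple; congr measurable_fun; apply/funext => x /=.
by congr G; apply/matrixP => i j; rewrite mxE tnth_mktuple (ord1 j).
Qed.

Lemma measurable_softmax (k : 'cV[R]_D) l :
  measurable_fun [set: T] (fun x => softmax (attn_proj (h x) k) l 0).
Proof.
under eq_fun do rewrite /softmax mxE.
have m_exp i : measurable_fun [set: T] (fun x => expR (attn_proj (h x) k i 0)).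
  exact: measurableT_comp (@measurable_expR R) (measurable_attn_proj k i).
apply: measurable_funM => //; apply: measurable_funV_gt0 => [|x].
  exact: measurable_sum.
exact: sum_expR_gt0.
Qed.

Lemma measurable_attn (k v : 'cV[R]_D) :
  measurable_fun [set: T] (fun x => attn k v (h x)).
Proof.
apply: measurable_sum => l.
apply: measurable_funM; first exact: measurable_softmax.
exact: measurable_attn_proj.
Qed.

Lemma measurable_gauss_mat : measurable_fun [set: T] (fun x => gauss_mat (h x)).
Proof.
apply: measurable_prod => i _; apply: measurable_prod => j _.
exact: measurableT_comp (measurable_normal_pdf 0 1) (measurable_entry i j).
Qed.

End MeasurableAttention.

Section AttentionModel.
Variables (R : realType) (D Lbar : nat) (PL : nat -> R).
Variables (g : forall L : nat, 'I_L -> 'cV[R]_L -> R) (c : R).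
Variables kstar vstar : 'cV[R]_D.
Hypothesis PL_ge0 : forall L, (1 <= L <= Lbar)%N -> 0 <= PL L.
Hypothesis g_ge0 : forall L (eps : 'I_L) (chi : 'cV[R]_L), 0 <= g eps chi.
Hypothesis g_measurable : forall L (eps : 'I_L),
  measurable_fun [set: L.-tuple R] (fun t => g eps (\col_(i < L) tnth t i)).
Hypothesis g_ratio : forall L (eps eps' : 'I_L) (chi : 'cV[R]_L),
  g eps chi / g eps' chi = expR (c * (chi eps 0 - chi eps' 0)).

Local Notation joint := (joint PL g kstar).
Local Notation attn_star := (attn (c *: kstar) vstar).

Lemma joint_ge0 L (eps : 'I_L) (X : 'M[R]_(L, D)) :
  (1 <= L <= Lbar)%N -> 0 <= joint eps X.
Proof.
move=> L_range; rewrite /joint /dens.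
have gauss_ge0 : 0 <= gauss_mat X.
  by apply: prodr_ge0 => i _; apply: prodr_ge0 => j _; exact: normal_pdf_ge0.
by rewrite !mulr_ge0 ?PL_ge0 ?invr_ge0 ?ler0n.
Qed.

Lemma softmax_mul_sum_joint L (X : 'M[R]_(L, D)) (eps : 'I_L) :
  softmax (attn_proj X (c *: kstar)) eps 0 * \sum_(i < L) joint i X =
  joint eps X.
Proof.
set chi := attn_proj X kstar; set K := PL L * L%:R^-1 * gauss_mat X.
have jointE i : joint i X = K * g i chi by rewrite /joint /dens /K; ring.
rewrite (eq_bigr _ (fun i _ => jointE i)) -mulr_sumr mulrCA jointE.
congr (_ * _); apply: softmax_mul_sum => i j.
by rewrite g_ratio attn_projZ !mxE mulrBr.
Qed.

Lemma posterior_mean L (X : 'M[R]_(L, D)) :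
  \sum_(eps < L) joint eps X * target eps vstar X =
  (\sum_(eps < L) joint eps X) * attn_star X.
Proof.
rewrite /attn mulr_sumr; apply: eq_bigr => eps _.
by rewrite -softmax_mul_sum_joint /target mulrAC mulrC.
Qed.

Lemma cond_exp_y_attn L (X : 'M[R]_(L, D)) :
  \sum_(eps < L) joint eps X != 0 ->
  cond_exp_y PL g kstar vstar X = attn_star X.
Proof.
move=> S_neq0; rewrite /cond_exp_y.
under eq_bigr do rewrite mulrAC.
by rewrite -mulr_suml posterior_mean mulrAC divff // mul1r.
Qed.

Lemma bayes_integrandE L (eps : 'I_L) (X : 'M[R]_(L, D)) : (1 <= L <= Lbar)%N ->
  joint eps X * (target eps vstar X - cond_exp_y PL g kstar vstar X) ^+ 2 =
  joint eps X * (target eps vstar X - attn_star X) ^+ 2.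
Proof.
move=> L_range; have [S0|S_neq0] := eqVneq (\sum_(i < L) joint i X) 0.
  have -> : joint eps X = 0.
    by apply: (psumr_eq0P _ S0) => // i _; exact: joint_ge0.
  by rewrite !mul0r.
by rewrite cond_exp_y_attn.
Qed.

Lemma mx_measurable_joint L (eps : 'I_L) : mx_measurable (joint eps).
Proof.
have entry := @mx_measurable_entry R L D.
apply: measurable_funM; first exact: measurable_cst.
apply: measurable_funM; last exact: measurable_gauss_mat.
exact: measurable_fun_attn_proj.
Qed.

Lemma mx_measurable_weighted_sq_err L (w a b : 'M[R]_(L, D) -> R) :
  mx_measurable w -> mx_measurable a -> mx_measurable b ->
  mx_measurable (fun X => w X * (a X - b X) ^+ 2).
Proof.
move=> mw ma mb.
by apply: measurable_funM => //; apply: measurable_funX; exact: measurable_funB.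
Qed.

Lemma mx_measurable_risk_integrand L (eps : 'I_L) (k v : 'cV[R]_D) :
  mx_measurable (fun X => joint eps X * (target eps vstar X - attn k v X) ^+ 2).
Proof.
have entry := @mx_measurable_entry R L D.
apply: mx_measurable_weighted_sq_err; first exact: mx_measurable_joint.
  exact: measurable_attn_proj.
exact: measurable_attn.
Qed.

Local Notation risk_L L k v := (\sum_(eps < L)
  mat_int (fun X => (joint eps X * (target eps vstar X - attn k v X) ^+ 2)%:E)).

Lemma risk_L_attn_star_le L (k v : 'cV[R]_D) : (1 <= L <= Lbar)%N ->
  (risk_L L (c *: kstar) vstar <= risk_L L k v)%E.
Proof.
move=> L_range.
have integrand_ge0 (a : 'M[R]_(L, D) -> R) eps X :
    0 <= joint eps X * (target eps vstar X - a X) ^+ 2.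
  by rewrite mulr_ge0 ?joint_ge0 ?sqr_ge0.
have joint_sum_ge0 X : 0 <= \sum_(eps < L) joint eps X.
  by apply: sumr_ge0 => eps _; exact: joint_ge0.
rewrite -!mat_int_sum // => [|eps|eps]; try exact: mx_measurable_risk_integrand.
rewrite [X in (_ <= mat_int X)%E](_ : _ = fun X =>
    (\sum_(eps < L) joint eps X * (target eps vstar X - attn_star X) ^+ 2 +
     (\sum_(eps < L) joint eps X) * (attn_star X - attn k v X) ^+ 2)%:E);
  last first.
  by apply/funext => X; rewrite (weighted_bias_variance _ (posterior_mean X)).
rewrite mat_intD; first (apply: leeDl; apply: mat_int_ge0 => X).
- by rewrite mulr_ge0 ?sqr_ge0.
- by move=> X; apply: sumr_ge0 => eps _.
- by move=> X; rewrite mulr_ge0 ?sqr_ge0.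
- rewrite /mx_measurable; apply: measurable_sum => eps.
  exact: mx_measurable_risk_integrand.
- have entry := @mx_measurable_entry R L D.
  apply: mx_measurable_weighted_sq_err; try exact: measurable_attn.
  rewrite /mx_measurable; apply: measurable_sum => eps.
  exact: mx_measurable_joint.
Qed.

End AttentionModel.

Theorem proposition2 (R : realType) (D Lbar : nat) (PL : nat -> R)
  (g : forall L : nat, 'I_L -> 'cV[R]_L -> R) (c : R)
  (hD : (1 <= D)%N) (hLbar : (1 <= Lbar)%N)
  (hPL0 : forall L, (1 <= L <= Lbar)%N -> 0 <= PL L)
  (hPL1 : \sum_(1 <= L < Lbar.+1) PL L = 1)
  (hgmeas : forall (L : nat) (eps : 'I_L),
     measurable_fun [set: L.-tuple R] (fun t => g L eps (\col_(i < L) tnth t i)))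
  (hg0 : forall (L : nat) (eps : 'I_L) (chi : 'cV[R]_L), 0 <= g L eps chi)
  (hgdens : forall (k : 'cV[R]_D) (L : nat) (eps : 'I_L),
     mat_int (fun X : 'M[R]_(L, D) =>
       (g L eps (attn_proj X k) * gauss_mat X)%:E) = 1%E)
  (hc : 0 <= c)
  (hgratio : forall (L : nat) (eps eps' : 'I_L) (chi : 'cV[R]_L),
     g L eps chi / g L eps' chi = expR (c * (chi eps 0 - chi eps' 0)))
  (kstar vstar : 'cV[R]_D) :
  exists k0 v0 : 'cV[R]_D,
    risk Lbar PL g kstar vstar k0 v0 = bayes_risk Lbar PL g kstar vstar /\
    (forall k v : 'cV[R]_D,
       (risk Lbar PL g kstar vstar k0 v0 <= risk Lbar PL g kstar vstar k v)%E).
Proof.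
exists (c *: kstar), vstar; split.
- rewrite /risk /bayes_risk /expect; apply: eq_big_nat => L L_range.
  apply: eq_bigr => eps _; congr mat_int; apply/funext => X.
  by rewrite (bayes_integrandE kstar vstar hPL0 hg0 hgratio).
- move=> k v; rewrite /risk /expect.
  rewrite big_nat_cond [in X in (_ <= X)%E]big_nat_cond.
  apply: lee_sum => L /andP[L_range _].
  exact: (risk_L_attn_star_le kstar vstar hPL0 hg0 hgmeas hgratio).
Qed.
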